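(* Given the ability to perform incoherent unitaries and $k$ Hadamard gates (or generalised controlled Hadamards), computational basis measurements and classical control, then even with access to an arbitrary ancillary state $|\gamma\rangle$, it is impossible to implement $n$ Hadamards $H^{\otimes n}$ exactly (deterministically) for $n>k$.
   Context: Fix the computational basis. A unitary is incoherent if it has the form $U=\sum_x e^{i\theta_x}|\pi(x)\rangle\langle x|$ for real $\theta_x$ and a permutation $\pi$. A generalised controlled-$W$ gate is $\sum_{x\in S}|x\rangle\langle x|\otimes W+\sum_{y\in S^c}|y\rangle\langle y|\otimes I$ for some subset $S$ of bitstrings. Such operations are modelled as channels $\rho\mapsto\mathrm{Tr}_2\big(U(\rho\otimes|\gamma\rangle\langle\gamma|)U^\dagger\big)$ with $U=U_kV_k\cdots U_1V_1U_0$, where the $U_i$ are incoherent unitaries and the $V_i$ are (generalised controlled) Hadamards. *)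

(* Complex amplitudes live in an arbitrary
   numClosedFieldType C (e.g. algC, or complex numbers R[i]). *)
From HB Require Import structures.
From mathcomp Require Import all_boot all_order all_algebra all_fingroup.
Set Implicit Arguments. Unset Strict Implicit. Unset Printing Implicit Defensive.
Import Order.TTheory GRing.Theory Num.Theory.
Local Open Scope ring_scope.

Section Quantum.
Variable C : numClosedFieldType.

(* Operators on the Hilbert space spanned by the computational basis T,
   given by their matrix entries <x|A|y> = A x y. *)
Definition op (T : finType) := T -> T -> C.
Definition mulop (T : finType) (A B : op T) : op T :=
  fun x y => \sum_(z : T) A x z * B z y.
Definition adj (T : finType) (A : op T) : op T := fun x y => (A y x)^*.

Definition bits (n : nat) := {ffun 'I_n -> bool}.
(* basis of n system qubits together with m ancilla qubits *)
Definition qreg (n m : nat) := (bits n * bits m)%type.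
Definition qubit (n m : nat) := ('I_n + 'I_m)%type.

Definition qget n m (q : qubit n m) (a : qreg n m) : bool :=
  match q with inl i => a.1 i | inr j => a.2 j end.
Definition qset n m (q : qubit n m) (b : bool) (a : qreg n m) : qreg n m :=
  match q with
  | inl i => ([ffun i' => if i' == i then b else a.1 i'], a.2)
  | inr j => (a.1, [ffun j' => if j' == j then b else a.2 j'])
  end.

Definition hadamard_entry (u v : bool) : C := (-1) ^+ (u && v) / sqrtC 2.

(* Incoherent unitary: U = sum_x e^{i theta_x} |pi x><x|, phases written as
   unit-modulus scalars c x. *)
Definition incoherent (T : finType) (U : op T) : Prop :=
  exists (pi : {perm T}) (c : T -> C),
    (forall x, `|c x| = 1) /\
    (forall a b, U a b = if a == pi b then c b else 0).

(* Generalised controlled Hadamard with target qubit q, controlled on a set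
   of bitstrings of the remaining qubits.  A bitstring of the remaining
   qubits is encoded as the joint bitstring with qubit q cleared; the control
   condition for a basis state a is [qset q false a \in S].  S = setT gives
   the plain Hadamard on qubit q. *)
Definition gen_ctrl_had n m (q : qubit n m) (S : {set qreg n m}) : op (qreg n m) :=
  fun a b =>
    if qset q false a \in S then
      (if qset q false a == qset q false b
       then hadamard_entry (qget q a) (qget q b) else 0)
    else (a == b)%:R.

(* circuit n m k U : U = U_k V_k ... U_1 V_1 U_0 with U_i incoherent and
   V_i generalised controlled Hadamards, on n + m qubits. *)
Inductive circuit (n m : nat) : nat -> op (qreg n m) -> Prop :=
  | circuit0 (U : op (qreg n m)) : incoherent U -> @circuit n m 0 U
  | circuitS (k : nat) (U' Ui : op (qreg n m)) (q : qubit n m)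
      (S : {set qreg n m}) :
      @circuit n m k U' -> incoherent Ui ->
      @circuit n m k.+1 (mulop Ui (mulop (gen_ctrl_had q S) U')).

Definition tens_op n m (rho : op (bits n)) (sigma : op (bits m)) : op (qreg n m) :=
  fun a b => rho a.1 b.1 * sigma a.2 b.2.
Definition ptrace2 n m (M : op (qreg n m)) : op (bits n) :=
  fun x y => \sum_(e : bits m) M (x, e) (y, e).
Definition proj (T : finType) (g : T -> C) : op T := fun e f => g e * (g f)^*.
Definition normalized (T : finType) (g : T -> C) : Prop :=
  \sum_(e : T) `|g e| ^+ 2 = 1.

Definition channel n m (U : op (qreg n m)) (g : bits m -> C) (rho : op (bits n))
  : op (bits n) :=
  ptrace2 (mulop U (mulop (tens_op rho (proj g)) (adj U))).

Definition hadn n : op (bits n) :=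
  fun x y => \prod_(i < n) hadamard_entry (x i) (y i).
Definition hadn_channel n (rho : op (bits n)) : op (bits n) :=
  mulop (@hadn n) (mulop rho (adj (@hadn n))).

End Quantum.

From HB Require Import structures.
From mathcomp Require Import all_boot all_order all_algebra all_fingroup.
From mathcomp Require Import ring zify.
From Stdlib Require Import FunctionalExtensionality.
Import GRing.Theory Num.Theory.
Set Implicit Arguments. Unset Strict Implicit. Unset Printing Implicit Defensive.
Local Open Scope ring_scope.

(* Incoherent unitaries have one nonzero entry per column and a (generalised
   controlled) Hadamard has at most two, so a circuit U with k Hadamards, and
   its inverse, have at most 2^k nonzero entries per column.  If the channel
   of U with ancilla g is H^{(x)n}, the Gram matrix of the vectors
   U(|x> (x) g) is that of the vectors H|x>, hence U(u (x) g) = (H u) (x) phi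
   for a single ancilla vector phi.  Feeding |0> (x) g to U and |0> (x) phi to
   its inverse gives 2^n |phi| <= 2^k |g| and 2^n |g| <= 2^k |phi| for the
   support sizes, which forces 2^n <= 2^k. *)

Lemma card_bigcup_le (I T : finType) (B : {set I}) (S : I -> {set T}) :
  (#|\bigcup_(i in B) S i| <= \sum_(i in B) #|S i|)%N.
Proof.
elim/big_rec2: _ => [|i n U _ le]; first by rewrite cards0.
by rewrite (leq_trans (leq_card_setU _ U).1) ?leq_add2l.
Qed.

Lemma leq_of_cross_leq (N K x y : nat) :
  (0 < y -> N * x <= y * K -> N * y <= x * K -> N <= K)%N.
Proof. by move=> *; nia. Qed.

Section Operators.
Variable C : numClosedFieldType.
Implicit Types T : finType.

Definition apply_op T (A : op C T) (v : T -> C) : T -> C :=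
  fun a => \sum_b A a b * v b.
Definition ket T (x : T) : T -> C := fun a => (a == x)%:R.
Definition tensv (S T : finType) (u : S -> C) (w : T -> C) : S * T -> C :=
  fun p => u p.1 * w p.2.
Definition outer T (v w : T -> C) : op C T := fun a b => v a * (w b)^*.
Definition vsupp T (v : T -> C) := [set a | v a != 0].
Definition col_sparse T (A : op C T) (s : nat) :=
  forall b, (#|vsupp (A^~ b)| <= s)%N.

Lemma sum_delta T (x : T) (F : T -> C) : \sum_a (a == x)%:R * F a = F x.
Proof.
rewrite (bigD1 x) //= eqxx mul1r big1 ?addr0 // => a /negbTE ->.
by rewrite mul0r.
Qed.

Lemma sum_pair (I J : finType) (F : I * J -> C) :
  \sum_p F p = \sum_a \sum_e F (a, e).
Proof. by rewrite pair_bigA; apply: eq_bigr => -[a e]. Qed.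

Lemma apply_op_ket T (A : op C T) x : apply_op A (ket x) = A^~ x.
Proof.
apply: functional_extensionality => a.
by rewrite /apply_op -[RHS](sum_delta x); apply: eq_bigr => b _; rewrite mulrC.
Qed.

Lemma apply_op_mul T (A B : op C T) :
  apply_op (mulop A B) = apply_op A \o apply_op B.
Proof.
apply: functional_extensionality => v; apply: functional_extensionality => a.
rewrite /apply_op /mulop /=.
under eq_bigr => b _ do rewrite mulr_suml.
rewrite exchange_big; apply: eq_bigr => z _.
by rewrite mulr_sumr; apply: eq_bigr => b _; rewrite mulrA.
Qed.

Lemma mulop_delta_cancel T (U V : op C T) :
  (forall a b, mulop V U a b = (a == b)%:R) -> cancel (apply_op U) (apply_op V).
Proof.
move=> VU v; rewrite -[apply_op V _]/((apply_op V \o apply_op U) v) -apply_op_mul.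
apply: functional_extensionality => a; rewrite /apply_op -[RHS](sum_delta a).
by apply: eq_bigr => b _; rewrite VU eq_sym.
Qed.

Lemma card_vsupp_apply T (A : op C T) v s :
  col_sparse A s -> (#|vsupp (apply_op A v)| <= #|vsupp v| * s)%N.
Proof.
move=> spA.
have sub : vsupp (apply_op A v) \subset \bigcup_(b in vsupp v) vsupp (A^~ b).
  apply/subsetP => a; rewrite inE; apply: contraR => notin.
  rewrite /apply_op big1 // => b _.
  have [-> | vb] := eqVneq (v b) 0; first by rewrite mulr0.
  have [-> | Aab] := eqVneq (A a b) 0; first by rewrite mul0r.
  by case/negP: notin; apply/bigcupP; exists b; rewrite inE.
apply: leq_trans (subset_leq_card sub) _; apply: leq_trans (card_bigcup_le _ _) _.
by rewrite -sum_nat_const; apply: leq_sum => b _; apply: spA.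
Qed.

Lemma col_sparse_mul T (A B : op C T) s t :
  col_sparse A s -> col_sparse B t -> col_sparse (mulop A B) (t * s).
Proof.
move=> spA spB b; apply: leq_trans (card_vsupp_apply (B^~ b) spA) _.
by rewrite leq_mul2r spB orbT.
Qed.

Lemma card_vsupp_tensv (S T : finType) (u : S -> C) (w : T -> C) :
  #|vsupp (tensv u w)| = (#|vsupp u| * #|vsupp w|)%N.
Proof.
rewrite -cardsX; apply: eq_card => -[a e].
by rewrite !inE /tensv mulf_eq0 negb_or.
Qed.

Lemma card_vsupp_ket T (x : T) : #|vsupp (ket x)| = 1%N.
Proof.
rewrite -(cards1 x); apply: eq_card => a.
by rewrite !inE /ket pnatr_eq0 eqb0 negbK.
Qed.

Lemma vsupp_normalized_gt0 T (g : T -> C) : normalized g -> (0 < #|vsupp g|)%N.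
Proof.
move=> g1; rewrite card_gt0; apply/negP => /eqP g0.
move: g1; rewrite /normalized big1 => [/eqP | e _]; first by rewrite eq_sym oner_eq0.
have : e \notin vsupp g by rewrite g0 inE.
by rewrite inE negbK => /eqP ->; rewrite normr0 expr0n.
Qed.

Lemma apply_op_tensv (S T : finType) (A : op C (S * T)%type) u w p :
  apply_op A (tensv u w) p = \sum_x u x * \sum_e A p (x, e) * w e.
Proof.
rewrite /apply_op sum_pair; apply: eq_bigr => x _.
by rewrite mulr_sumr; apply: eq_bigr => e _; rewrite /tensv /=; ring.
Qed.

Lemma apply_op_tensv_ket (S T : finType) (A : op C (S * T)%type) x w p :
  apply_op A (tensv (ket x) w) p = \sum_e A p (x, e) * w e.
Proof. by rewrite apply_op_tensv /ket sum_delta. Qed.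

Lemma tens_op_outer n m (v w : bits n -> C) (v' w' : bits m -> C) :
  tens_op (outer v w) (outer v' w') = outer (tensv v v') (tensv w w').
Proof.
apply: functional_extensionality => a; apply: functional_extensionality => b.
by rewrite /tens_op /outer /tensv rmorphM /=; ring.
Qed.

Lemma mulop_outer_adj T (A : op C T) v w a b :
  mulop A (mulop (outer v w) (adj A)) a b =
  apply_op A v a * (apply_op A w b)^*.
Proof.
rewrite /mulop /outer /adj /apply_op rmorph_sum mulr_suml.
apply: eq_bigr => z _; rewrite -[RHS]mulrA; congr (_ * _); rewrite mulr_sumr.
by apply: eq_bigr => y _; rewrite rmorphM /=; ring.
Qed.

(* The squared norm of [a p - (c p / c p0) a p0] expands, by the Gram
   identity, to zero. *)
Lemma gram_rank1_proportional (I J : finType) (a : I -> J -> C) (c : I -> C) p0 :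
  c p0 != 0 -> (forall p q, \sum_f a p f * (a q f)^* = c p * (c q)^*) ->
  forall p f, a p f = c p * (a p0 f / c p0).
Proof.
move=> c0 gram p.
have c0' : (c p0)^* != 0 by rewrite conjC_eq0.
pose d f := a p f - c p * (a p0 f / c p0).
have normd f : d f * (d f)^* = a p f * (a p f)^*
   - ((c p)^* / (c p0)^*) * (a p f * (a p0 f)^*)
   - (c p / c p0) * (a p0 f * (a p f)^*)
   + (c p * (c p)^* / (c p0 * (c p0)^*)) * (a p0 f * (a p0 f)^*).
  by rewrite /d rmorphB rmorphM fmorph_div /=; field; apply/andP.
have sum_normd : \sum_f d f * (d f)^* = 0.
  rewrite (eq_bigr _ (fun f _ => normd f)) !big_split /= !sumrN -!mulr_sumr !gram.
  by field; apply/andP.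
move=> f; apply/eqP; rewrite -subr_eq0 -mul_conjC_eq0; apply/eqP.
apply: (psumr_eq0P _ sum_normd) => // h _.
by rewrite -normCK exprn_ge0.
Qed.

Section Incoherent.
Variables (T : finType) (U : op C T).
Hypothesis incU : incoherent U.

Lemma incoherent_col_sparse : col_sparse U 1.
Proof.
have [pi [c [_ defU]]] := incU; move=> b.
have sub : vsupp (U^~ b) \subset [set pi b].
  by apply/subsetP => a; rewrite !inE defU; case: ifP => // _; rewrite eqxx.
by apply: leq_trans (subset_leq_card sub) _; rewrite cards1.
Qed.

Lemma incoherent_adj : incoherent (adj U).
Proof.
have [pi [c [c1 defU]]] := incU.
exists (pi^-1)%g, (fun b => (c ((pi^-1)%g b))^*); split=> [b | a b].
  by rewrite norm_conjC.
rewrite /adj defU; have [-> | ne] := eqVneq b (pi a); first by rewrite permK eqxx.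
case: eqP => [ab | _]; last by rewrite rmorph0.
by case/eqP: ne; rewrite ab permKV.
Qed.

Lemma incoherent_unitary : cancel (apply_op U) (apply_op (adj U)).
Proof.
have [pi [c [c1 defU]]] := incU.
apply: mulop_delta_cancel => a b; rewrite /mulop /adj.
rewrite (eq_bigr (fun z => (z == pi a)%:R * ((c a)^* * U z b))) => [|z _]; last first.
  by rewrite defU; case: eqP; rewrite ?mul1r ?rmorph0 ?mul0r.
rewrite sum_delta defU (inj_eq perm_inj); case: eqP => [-> | _]; last by rewrite mulr0.
by rewrite mulrC -normCK c1 expr1n.
Qed.

End Incoherent.

Lemma sum_hadamard_entry u w :
  \sum_v hadamard_entry C u v * hadamard_entry C v w = (u == w)%:R.
Proof.
have s2 : sqrtC (2 : C) * sqrtC 2 = 2 by rewrite -expr2 sqrtCK.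
have s0 : sqrtC (2 : C) != 0 by rewrite sqrtC_eq0 pnatr_eq0.
rewrite big_bool /hadamard_entry.
by case: u; case: w => /=; rewrite ?expr0 ?expr1 !mulf_div s2; field;
  rewrite ?pnatr_eq0.
Qed.

Section Qubit.
Variables (n m : nat) (q : qubit n m).
Local Notation fiber a := (qset q false a).

Lemma qget_set v a : qget q (qset q v a) = v.
Proof. by case: q => i /=; rewrite ffunE eqxx. Qed.

Lemma qset_set v w a : qset q v (qset q w a) = qset q v a.
Proof.
by case: a q => a1 a2 [] i /=; congr pair; apply/ffunP => j; rewrite !ffunE;
  case: eqP.
Qed.

Lemma qset_get a : qset q (qget q a) a = a.
Proof.
case: a q => a1 a2 [] i /=; congr pair; apply/ffunP => j; rewrite !ffunE.
  by case: eqP => [->|].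
by case: eqP => [->|].
Qed.

Lemma qset_fiber a b : fiber a = fiber b -> a = qset q (qget q a) b.
Proof. by move=> ab; rewrite -(qset_set _ false b) -ab qset_set qset_get. Qed.

Lemma qset_true_neq_false a : qset q true a != qset q false a.
Proof. by apply/eqP => /(congr1 (qget q)); rewrite !qget_set. Qed.

Lemma sum_fiber a (F : qreg n m -> C) :
  (forall z, fiber a != fiber z -> F z = 0) -> \sum_z F z = \sum_v F (qset q v a).
Proof.
move=> F0; rewrite big_bool (bigD1 (qset q true a)) //= (bigD1 (qset q false a)) /=.
  rewrite big1 ?addr0 // => z /andP [zt zf]; apply: F0; apply: contra zt => /eqP az.
  by move: zf; rewrite (qset_fiber (esym az)); case: (qget q z); rewrite ?eqxx.
by rewrite eq_sym qset_true_neq_false.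
Qed.

End Qubit.

Section GenCtrlHad.
Variables (n m : nat) (q : qubit n m) (S : {set qreg n m}).
Local Notation G := (gen_ctrl_had C q S).
Local Notation fiber a := (qset q false a).

Lemma gen_ctrl_had_off_fiber a z : fiber a != fiber z -> G a z = 0.
Proof.
move=> az; rewrite /gen_ctrl_had (negbTE az); case: ifP => // _.
by have [ez | //] := eqVneq a z; rewrite ez eqxx in az.
Qed.

Lemma gen_ctrl_had_col_sparse : col_sparse G 2.
Proof.
move=> b.
have sub : vsupp (G^~ b) \subset [set qset q false b; qset q true b].
  apply/subsetP => a; rewrite inE; have [ab _ | ab] := eqVneq (fiber a) (fiber b).
    by rewrite (qset_fiber ab) !inE; case: (qget q a); rewrite eqxx ?orbT.
  by rewrite gen_ctrl_had_off_fiber ?eqxx.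
by apply: leq_trans (subset_leq_card sub) _; rewrite cards2; case: (_ != _).
Qed.

Lemma gen_ctrl_had_invol : cancel (apply_op G) (apply_op G).
Proof.
apply: mulop_delta_cancel => a b; rewrite /mulop.
have [ctrl | ctrl] := boolP (fiber a \in S); last first.
  rewrite (eq_bigr (fun z => (z == a)%:R * G z b)) => [|z _]; last first.
    by congr (_ * _); rewrite /gen_ctrl_had (negbTE ctrl) eq_sym.
  by rewrite sum_delta /gen_ctrl_had (negbTE ctrl).
rewrite (@sum_fiber n m q a (fun z => G a z * G z b)) => [|z az]; last first.
  by rewrite gen_ctrl_had_off_fiber ?mul0r.
have G_fiber v : G a (qset q v a) * G (qset q v a) b =
    hadamard_entry C (qget q a) v *
    (if fiber a == fiber b then hadamard_entry C v (qget q b) else 0).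
  by rewrite /gen_ctrl_had !qset_set ctrl eqxx qget_set.
rewrite (eq_bigr _ (fun v _ => G_fiber v)).
have [ab | ab] := eqVneq (fiber a) (fiber b); last first.
  rewrite big1 => [|v _]; last by rewrite mulr0.
  by have [eab | //] := eqVneq a b; rewrite eab eqxx in ab.
rewrite sum_hadamard_entry; have [-> | neab] := eqVneq a b; first by rewrite eqxx.
by case: eqP => // ab'; case/eqP: neab; rewrite (qset_fiber ab) ab' qset_get.
Qed.

End GenCtrlHad.

Lemma circuit_sparse_invertible n m k (U : op C (qreg n m)) :
  @circuit C n m k U ->
  col_sparse U (2 ^ k) /\
  exists V, cancel (apply_op U) (apply_op V) /\ col_sparse V (2 ^ k).
Proof.
elim=> [U0 inc | {}k U' Ui q S _ [spU' [V [U'K spV]]] inc].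
  split; first exact: incoherent_col_sparse.
  exists (adj U0); split; first exact: incoherent_unitary.
  exact/incoherent_col_sparse/incoherent_adj.
split.
  rewrite expnSr -[(_ * 2)%N]muln1; apply: col_sparse_mul (incoherent_col_sparse inc) _.
  exact: col_sparse_mul (gen_ctrl_had_col_sparse q S) spU'.
exists (mulop V (mulop (gen_ctrl_had C q S) (adj Ui))); split.
  rewrite !apply_op_mul.
  exact: can_comp (incoherent_unitary inc) (can_comp (gen_ctrl_had_invol q S) U'K).
rewrite expnS; apply: col_sparse_mul spV _.
exact: col_sparse_mul (gen_ctrl_had_col_sparse q S)
  (incoherent_col_sparse (incoherent_adj inc)).
Qed.

Lemma hadn_neq0 n (x y : bits n) : hadn C x y != 0.
Proof.
apply/prodf_neq0 => i _; rewrite /hadamard_entry mulf_neq0 ?signr_eq0 //.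
by rewrite invr_eq0 sqrtC_eq0 pnatr_eq0.
Qed.

Lemma card_vsupp_hadn_ket n (x : bits n) :
  #|vsupp (apply_op (@hadn C _) (ket x))| = (2 ^ n)%N.
Proof.
rewrite apply_op_ket (_ : vsupp _ = setT); last first.
  by apply/setP => y; rewrite !inE hadn_neq0.
by rewrite cardsT card_ffun card_bool card_ord.
Qed.

Lemma hadn_invol n : cancel (apply_op (@hadn C n)) (apply_op (@hadn C n)).
Proof.
apply: mulop_delta_cancel => x y; rewrite /mulop /hadn.
under eq_bigr => z _ do rewrite -big_split /=.
rewrite -(bigA_distr_bigA
  (fun i b => hadamard_entry C (x i) b * hadamard_entry C b (y i))) /=.
under eq_bigr => i _ do rewrite sum_hadamard_entry.
have [-> | xy] := eqVneq x y; first by rewrite big1 // => i _; rewrite eqxx.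
have [i /negbTE xiy] : exists i, x i != y i.
  apply/existsP; apply: contraNT xy => /existsPn xy; apply/eqP/ffunP => i.
  exact/eqP/negbNE.
by rewrite (bigD1 i) //= xiy mul0r.
Qed.

Lemma channel_outer n m (U : op C (qreg n m)) g (v w : bits n -> C) x y :
  channel U g (outer v w) x y =
  \sum_f apply_op U (tensv v g) (x, f) * (apply_op U (tensv w g) (y, f))^*.
Proof.
rewrite /channel /ptrace2 -[proj g]/(outer g g) tens_op_outer.
by apply: eq_bigr => f _; rewrite mulop_outer_adj.
Qed.

Lemma hadn_channel_dilation n m (U : op C (qreg n m)) g :
  (forall rho x y, channel U g rho x y = hadn_channel rho x y) ->
  exists phi, forall u, apply_op U (tensv u g) = tensv (apply_op (@hadn C _) u) phi.
Proof.
move=> chanUH.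
pose W (p : bits n * bits n) f := \sum_e U (p.2, f) (p.1, e) * g e.
have gramW p p' : \sum_f W p f * (W p' f)^* = hadn C p.2 p.1 * (hadn C p'.2 p'.1)^*.
  have := chanUH (outer (ket p.1) (ket p'.1)) p.2 p'.2.
  rewrite channel_outer /hadn_channel mulop_outer_adj !apply_op_ket => <-.
  by apply: eq_bigr => f _; rewrite !apply_op_tensv_ket.
pose x0 : bits n := [ffun=> false].
exists (fun f => W (x0, x0) f / hadn C x0 x0) => u.
apply: functional_extensionality => -[y f].
rewrite apply_op_tensv /tensv /apply_op /= mulr_suml; apply: eq_bigr => x _.
have := gram_rank1_proportional (c := fun p => hadn C p.2 p.1) (p0 := (x0, x0))
  (hadn_neq0 x0 x0) gramW (x, y) f.
by rewrite /W /= => ->; rewrite mulrA [u x * _]mulrC.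
Qed.

End Operators.

Arguments ket {C T} x _.

Theorem theorem3 (C : numClosedFieldType) (n k : nat) :
  (k < n)%N ->
  ~ exists (m : nat) (U : op C (qreg n m)) (g : bits m -> C),
      @circuit C n m k U /\ normalized g /\
      (forall (rho : op C (bits n)) (x y : bits n),
          channel U g rho x y = hadn_channel rho x y).
Proof.
move=> lt_kn [m [U [g [circU [g1 chanUH]]]]].
have [spU [V [UK spV]]] := circuit_sparse_invertible circU.
have [phi Ug] := hadn_channel_dilation chanUH.
pose x0 : bits n := [ffun=> false].
have supp_phi : (2 ^ n * #|vsupp phi| <= #|vsupp g| * 2 ^ k)%N.
  have := card_vsupp_apply (tensv (ket x0) g) spU.
  by rewrite Ug !card_vsupp_tensv card_vsupp_ket card_vsupp_hadn_ket mul1n.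
have supp_g : (2 ^ n * #|vsupp g| <= #|vsupp phi| * 2 ^ k)%N.
  have := card_vsupp_apply (tensv (ket x0) phi) spV.
  rewrite -{1}(hadn_invol (ket x0)) -Ug UK.
  by rewrite !card_vsupp_tensv card_vsupp_ket card_vsupp_hadn_ket mul1n.
have := leq_of_cross_leq (vsupp_normalized_gt0 g1) supp_phi supp_g.
by rewrite leq_exp2l // leqNgt lt_kn.
Qed.
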